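(* Let $M$ be an adequate monoid and $\chi:\Sigma\to M$ a function, and let $\rho:UT^1(\Sigma)\to M$ be the map defined below. Then $\rho$ is a morphism of $(2,1,1,0)$-algebras from $UT^1(\Sigma)$ (with unpruned multiplication $\times$, unpruned $(+)$, unpruned $( * )$ and the trivial tree as identity) to $M$; that is, $\rho(X\times Y)=\rho(X)\rho(Y)$, $\rho(X^{(+)})=\rho(X)^+$, $\rho(X^{( * )})=\rho(X)^*$ for all $X,Y$, and $\rho$ maps the trivial tree to $1$.
   Context: Adequate monoid: a monoid $M$ whose idempotents commute and in which every $\mathcal{L}^*$-class and every $\mathcal{R}^*$-class contains an idempotent, where $a\,\mathcal{L}^*\,b$ iff ($ax=ay\Leftrightarrow bx=by$ for all $x,y\in M$) and $a\,\mathcal{R}^*\,b$ iff ($xa=ya\Leftrightarrow xb=yb$ for all $x,y\in M$); $x^+$ and $x^*$ denote the unique idempotents $\mathcal{R}^*$- and $\mathcal{L}^*$-related to $x$. It is regarded as a $(2,1,1,0)$-algebra. Trees: a $\Sigma$-tree is a finite directed graph whose underlying undirected graph is a tree, each edge $e$ having initial vertex $\alpha(e)$, terminal vertex $\omega(e)$ and label $\lambda(e)\in\Sigma$, with distinguished start and end vertices such that there is a (possibly empty) directed path (the trunk) from start to end vertex. Trivial tree: one vertex; idempotent tree: start vertex equals end vertex. $UT^1(\Sigma)$ is the set of isomorphism types (label-, start- and end-preserving graph isomorphisms) of $\Sigma$-trees. Unpruned operations: $X\times Y$ identifies the end vertex of (a copy of) $X$ with the start vertex of (a disjoint copy of) $Y$,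 start vertex that of $X$, end vertex that of $Y$; $X^{(+)}$ is $X$ with end vertex moved to the start vertex; $X^{( * )}$ is $X$ with start vertex moved to the end vertex. The map $\tau$ from idempotent trees to idempotents of $M$ is defined recursively on the number of edges: if $X$ has no edges, $\tau(X)=1$. Otherwise let $v$ be its start (= end) vertex; for an edge $e$ with $\alpha(e)=v$ let $X_e$ be the connected component of $X$ with edge $e$ removed containing $\omega(e)$, viewed as an idempotent tree with start and end vertex $\omega(e)$; for an edge $e$ with $\omega(e)=v$ let $X_e$ be the component of $X$ with $e$ removed containing $\alpha(e)$, viewed as an idempotent tree at $\alpha(e)$. Then $\tau(X)=\prod_{e:\alpha(e)=v}[\chi(\lambda(e))\tau(X_e)]^+\cdot\prod_{e:\omega(e)=v}[\tau(X_e)\chi(\lambda(e))]^*$ (a product of commuting idempotents, independent of order). For an arbitrary tree $X$ with trunk vertices $v_0,\dots,v_n$ in order and $a_i$ the label of the trunk edge from $v_{i-1}$ to $v_i$, let $X_i$ be the connected component containing $v_i$ of $X$ with all trunk edges removed, viewed as an idempotent tree at $v_i$, and set $\rho(X)=\tau(X_0)\chi(a_1)\tau(X_1)\chi(a_2)\cdots\chi(a_n)\tau(X_n)$. *)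

From mathcomp Require Import all_boot.
From Stdlib Require Import ClassicalEpsilon.

Set Implicit Arguments.
Unset Strict Implicit.
Unset Printing Implicit Defensive.

Definition Lstar (T : Type) (mul : T -> T -> T) (a b : T) : Prop :=
  forall x y, mul a x = mul a y <-> mul b x = mul b y.

Definition Rstar (T : Type) (mul : T -> T -> T) (a b : T) : Prop :=
  forall x y, mul x a = mul y a <-> mul x b = mul y b.

Definition idempotent_el (T : Type) (mul : T -> T -> T) (e : T) : Prop :=
  mul e e = e.

Record adequate_monoid := AdequateMonoid {
  acar :> Type;
  amul : acar -> acar -> acar;
  aone : acar;
  amulA : forall a b c, amul a (amul b c) = amul (amul a b) c;
  amul1 : forall a, amul aone a = a;
  amulr1 : forall a, amul a aone = a;
  aidem_comm : forall e f, idempotent_el amul e -> idempotent_el amul f ->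
                 amul e f = amul f e;
  aR_idem : forall a, exists e, idempotent_el amul e /\ Rstar amul e a;
  aL_idem : forall a, exists e, idempotent_el amul e /\ Lstar amul e a
}.

(* x^+ : the (unique) idempotent R*-related to x *)
Definition aplus (M : adequate_monoid) (x : M) : M :=
  proj1_sig (constructive_indefinite_description _ (aR_idem x)).

(* x^* : the (unique) idempotent L*-related to x *)
Definition astar (M : adequate_monoid) (x : M) : M :=
  proj1_sig (constructive_indefinite_description _ (aL_idem x)).

Record tree (Sigma : Type) := Tree {
  tV : finType;
  tE : finType;
  talpha : tE -> tV;
  tomega : tE -> tV;
  tlab : tE -> Sigma;
  tstart : tV;
  tend : tV
}.

Section Trees.
Local Unset Implicit Arguments.
Variable Sigma : Type.
Implicit Types X Y : tree Sigma.

Definition uadj X : rel (tV X) :=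
  fun u w => [exists e, ((talpha e == u) && (tomega e == w))
                        || ((talpha e == w) && (tomega e == u))].

Definition dadj X : rel (tV X) :=
  fun u w => [exists e, (talpha e == u) && (tomega e == w)].

Fixpoint dwalk X (v : tV X) (es : seq (tE X)) (w : tV X) : bool :=
  match es with
  | [::] => v == w
  | e :: es' => (talpha e == v) && dwalk X (tomega e) es' w
  end.

(* X is a Sigma-tree: the underlying undirected graph is a tree (connected,
   with one edge fewer than vertices), and there is a directed path from
   the start vertex to the end vertex. *)
Definition is_tree X : Prop :=
  [/\ forall u w : tV X, connect (uadj X) u w,
      #|tE X|.+1 = #|tV X| &
      exists es, dwalk X (tstart X) es (tend X)].

(* the trunk: the (unique, in a tree) directed path from start to end *)
Definition trunk X : seq (tE X) :=
  epsilon (inhabits [::]) (fun es => dwalk X (tstart X) es (tend X)).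

(* X x Y : glue the end vertex of X to the start vertex of Y *)
Definition tmulV X Y : finType :=
  (tV X + {v : tV Y | v != tstart Y})%type.

Definition embY X Y (v : tV Y) : tmulV X Y :=
  match insub v with
  | Some u => inr u
  | None => inl (tend X)
  end.

Definition tmul X Y : tree Sigma :=
  @Tree Sigma (tmulV X Y) (tE X + tE Y)%type
    (fun e => match e with inl e => inl (talpha e) | inr e => embY X Y (talpha e) end)
    (fun e => match e with inl e => inl (tomega e) | inr e => embY X Y (tomega e) end)
    (fun e => match e with inl e => tlab e | inr e => tlab e end)
    (inl (tstart X))
    (embY X Y (tend Y)).

Definition tplus X : tree Sigma :=
  @Tree Sigma (tV X) (tE X) (@talpha _ X) (@tomega _ X) (@tlab _ X)
    (tstart X) (tstart X).

Definition tstar X : tree Sigma :=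
  @Tree Sigma (tV X) (tE X) (@talpha _ X) (@tomega _ X) (@tlab _ X)
    (tend X) (tend X).

Definition ttriv : tree Sigma :=
  @Tree Sigma unit void (fun e => match e with end) (fun e => match e with end)
    (fun e => match e with end) tt tt.

Variable M : adequate_monoid.
Variable chi : Sigma -> M.

(* tau_at X n v excl = tau of the idempotent tree rooted at v consisting of
   the connected component of v in X with the edges of excl removed
   (recursion on the number of edges; n is a bound on it).  For an edge e
   at v, the component X_e of (that tree minus e) containing the other end
   of e is the component of X minus e, i.e. it is obtained by excluding
   just e at its root. *)
Fixpoint tau_at X (n : nat) (v : tV X) (excl : pred (tE X)) : M :=
  match n with
  | 0 => aone M
  | n'.+1 =>
    amul
      (\big[@amul M/aone M]_(e : tE X | ~~ excl e && (talpha e == v))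
          aplus (amul (chi (tlab e)) (tau_at X n' (tomega e) (pred1 e))))
      (\big[@amul M/aone M]_(e : tE X | ~~ excl e && (tomega e == v))
          astar (amul (tau_at X n' (talpha e) (pred1 e)) (chi (tlab e))))
  end.

(* tau of the idempotent tree X_i hanging at the trunk vertex v *)
Definition tau_trunk X (v : tV X) : M :=
  tau_at X #|tE X| v (fun f => f \in trunk X).

(* tau(X_0) chi(a_1) tau(X_1) ... chi(a_n) tau(X_n) along the trunk *)
Fixpoint rho_aux X (v : tV X) (es : seq (tE X)) : M :=
  match es with
  | [::] => tau_trunk X v
  | e :: es' => amul (tau_trunk X v) (amul (chi (tlab e)) (rho_aux X (tomega e) es'))
  end.

Definition rho X : M := rho_aux X (tstart X) (trunk X).

End Trees.

Arguments rho {Sigma M} chi X.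
Arguments tmul {Sigma} X Y.
Arguments tplus {Sigma} X.
Arguments tstar {Sigma} X.
Arguments is_tree {Sigma} X.

(* rho(X) multiplies, along the trunk, the letters of the trunk edges and the
   values tau(X_i) of the idempotent trees hanging at the trunk vertices.
   Gluing X to Y concatenates the trunks and changes only the tree hanging at the
   junction, whose tau is tau(X_n) tau(Y_0) because tau is a product of commuting
   idempotents; every other hanging tree is carried over isomorphically.
   In X^(+) the whole of X hangs at the start vertex, and its tau splits off the
   first trunk edge a_1 as tau(X_0) [chi(a_1) tau(rest)]^+.  Since
   (e x)^+ = e x^+ for idempotent e and (x y)^+ = (x y^+)^+, induction along the
   trunk yields rho(X)^+; X^(star) is dual.  The graph theory behind this is that
   in a tree reduced walks between two vertices are unique: this makes the trunk
   well defined and the edge-bounded recursion defining tau stable. *)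

From mathcomp Require Import all_boot.
From HB Require Import structures.
From mathcomp Require Import zify.
From Stdlib Require Import ProofIrrelevance ClassicalEpsilon.

Set Implicit Arguments.
Unset Strict Implicit.
Unset Printing Implicit Defensive.

Section AdequateMonoid.
Variable M : adequate_monoid.
Local Notation "a * b" := (amul a b).
Local Notation "1" := (aone M).
Local Notation idem := (idempotent_el (@amul M)).
Local Notation Rstar := (Rstar (@amul M)).
Local Notation Lstar := (Lstar (@amul M)).

Lemma aplus_spec (x : M) : idem (aplus x) /\ Rstar (aplus x) x.
Proof. by rewrite /aplus; case: constructive_indefinite_description. Qed.

Lemma astar_spec (x : M) : idem (astar x) /\ Lstar (astar x) x.
Proof. by rewrite /astar; case: constructive_indefinite_description. Qed.

Lemma idem1 : idem 1. Proof. exact: amul1. Qed.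

Lemma idemM e f : idem e -> idem f -> idem (e * f).
Proof.
move=> he hf; rewrite /idempotent_el -amulA (amulA f e f) -(aidem_comm he hf).
by rewrite -amulA hf amulA he.
Qed.

Lemma Rstar_idem_eq e f : idem e -> idem f -> Rstar e f -> e = f.
Proof.
move=> he hf ef.
have fe : e * f = f by have := proj1 (ef e 1); rewrite !amul1; apply.
have ef' : f * e = e by have := proj2 (ef f 1); rewrite !amul1; apply.
by rewrite -ef' -(aidem_comm he hf) fe.
Qed.

Lemma Lstar_idem_eq e f : idem e -> idem f -> Lstar e f -> e = f.
Proof.
move=> he hf ef.
have fe : f * e = f by have := proj1 (ef e 1); rewrite !amulr1; apply.
have ef' : e * f = e by have := proj2 (ef f 1); rewrite !amulr1; apply.
by rewrite -ef' (aidem_comm he hf) fe.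
Qed.

Lemma Rstar_trans a b c : Rstar a b -> Rstar b c -> Rstar a c.
Proof. by move=> ab bc x y; rewrite ab. Qed.

Lemma Rstar_sym a b : Rstar a b -> Rstar b a.
Proof. by move=> ab x y; rewrite ab. Qed.

Lemma Lstar_trans a b c : Lstar a b -> Lstar b c -> Lstar a c.
Proof. by move=> ab bc x y; rewrite ab. Qed.

Lemma Lstar_sym a b : Lstar a b -> Lstar b a.
Proof. by move=> ab x y; rewrite ab. Qed.

Lemma Rstar_mul2l c a b : Rstar a b -> Rstar (c * a) (c * b).
Proof. by move=> ab x y; rewrite !amulA. Qed.

Lemma Lstar_mul2r c a b : Lstar a b -> Lstar (a * c) (b * c).
Proof. by move=> ab x y; rewrite -!amulA. Qed.

Lemma aplus_idem (e : M) : idem e -> aplus e = e.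
Proof. by move=> he; case: (aplus_spec e) => idp ep; apply: Rstar_idem_eq. Qed.

Lemma astar_idem (e : M) : idem e -> astar e = e.
Proof. by move=> he; case: (astar_spec e) => ids es; apply: Lstar_idem_eq. Qed.

Lemma aplus_mul_aplus (x y : M) : aplus (x * y) = aplus (x * aplus y).
Proof.
have [i1 r1] := aplus_spec (x * y); have [i2 r2] := aplus_spec (x * aplus y).
apply: Rstar_idem_eq => //; apply: (Rstar_trans r1).
apply: (Rstar_trans _ (Rstar_sym r2)); apply/Rstar_mul2l/Rstar_sym.
exact: (aplus_spec y).2.
Qed.

Lemma aplus_idemMl (e x : M) : idem e -> aplus (e * x) = e * aplus x.
Proof.
move=> he; have [i1 r1] := aplus_spec (e * x); have [i2 r2] := aplus_spec x.
apply: Rstar_idem_eq => //; first exact: idemM.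
by apply: (Rstar_trans r1); apply/Rstar_mul2l/Rstar_sym.
Qed.

Lemma astar_astar_mul (x y : M) : astar (x * y) = astar (astar x * y).
Proof.
have [i1 l1] := astar_spec (x * y); have [i2 l2] := astar_spec (astar x * y).
apply: Lstar_idem_eq => //; apply: (Lstar_trans l1).
apply: (Lstar_trans _ (Lstar_sym l2)); apply/Lstar_mul2r/Lstar_sym.
exact: (astar_spec x).2.
Qed.

Lemma astar_idemMr (x e : M) : idem e -> astar (x * e) = astar x * e.
Proof.
move=> he; have [i1 l1] := astar_spec (x * e); have [i2 l2] := astar_spec x.
apply: Lstar_idem_eq => //; first exact: idemM.
by apply: (Lstar_trans l1); apply/Lstar_mul2r/Lstar_sym.
Qed.

(* tau is a product indexed by a finite type of edges; to use the big operators
   of bigop, which need a commutative law, it is computed among the idempotents. *)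
Record idemT := IdemT { ival : M; ivalP : idem ival }.

Lemma ival_inj : injective ival.
Proof.
by case=> a ha [b hb] /= eab; subst b; congr IdemT; apply: proof_irrelevance.
Qed.

Definition imul (a b : idemT) : idemT := IdemT (idemM (ivalP a) (ivalP b)).
Definition ione : idemT := IdemT idem1.

Lemma imulA : associative imul.
Proof. by move=> a b c; apply: ival_inj; apply: amulA. Qed.

Lemma imulC : commutative imul.
Proof. by move=> a b; apply: ival_inj; apply/aidem_comm/ivalP/ivalP. Qed.

Lemma imul1m : left_id ione imul.
Proof. by move=> a; apply: ival_inj; apply: amul1. Qed.

HB.instance Definition _ := Monoid.isComLaw.Build idemT ione imul imulA imulC imul1m.

Definition aplusI (x : M) : idemT := IdemT (aplus_spec x).1.
Definition astarI (x : M) : idemT := IdemT (astar_spec x).1.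

Lemma ival_imul a b : ival (imul a b) = ival a * ival b. Proof. by []. Qed.
Lemma ival_aplusI x : ival (aplusI x) = aplus x. Proof. by []. Qed.
Lemma ival_astarI x : ival (astarI x) = astar x. Proof. by []. Qed.

Lemma big_ival (I : Type) (r : seq I) (P : pred I) (F : I -> idemT) :
  ival (\big[imul/ione]_(i <- r | P i) F i) = \big[@amul M/1]_(i <- r | P i) ival (F i).
Proof. exact: (big_morph ival). Qed.

End AdequateMonoid.

Section Walks.
Variable Sigma : Type.
Variable X : tree Sigma.
Local Notation V := (tV X).
Local Notation E := (tE X).

Definition ends (c : E * bool) : V * V :=
  if c.2 then (talpha c.1, tomega c.1) else (tomega c.1, talpha c.1).

Fixpoint uwalk (v : V) (s : seq (E * bool)) (w : V) : bool :=
  if s is c :: s' then ((ends c).1 == v) && uwalk (ends c).2 s' w else v == w.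

Fixpoint reduced (s : seq (E * bool)) : bool :=
  if s is c :: s' then (if s' is d :: _ then c.1 != d.1 else true) && reduced s'
  else true.

Definition flip_step (c : E * bool) := (c.1, ~~ c.2).
Definition rev_walk s := rev (map flip_step s).
Definition walk_end v s := last v (map (fun c => (ends c).2) s).
Definition head_notin (excl : pred E) (s : seq (E * bool)) :=
  if s is c :: _ then ~~ excl c.1 else true.

Lemma ends_flip c : ends (flip_step c) = ((ends c).2, (ends c).1).
Proof. by case: c => e []. Qed.

Lemma uwalk_cat v s1 s2 w :
  uwalk v (s1 ++ s2) w = uwalk v s1 (walk_end v s1) && uwalk (walk_end v s1) s2 w.
Proof.
elim: s1 v => [|c s1 IH] v /=; first by rewrite eqxx.
by rewrite IH /walk_end /= andbA.
Qed.

Lemma uwalk_end v s w : uwalk v s w -> w = walk_end v s.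
Proof. by elim: s v => [|c s IH] v /=; [move/eqP | case/andP=> _ /IH]. Qed.

Lemma uwalk_catI v s1 m s2 w : uwalk v s1 m -> uwalk m s2 w -> uwalk v (s1 ++ s2) w.
Proof. by move=> h1 h2; rewrite uwalk_cat -(uwalk_end h1) h1. Qed.

Lemma uwalk_catE v s1 s2 w :
  uwalk v (s1 ++ s2) w -> exists m, uwalk v s1 m /\ uwalk m s2 w.
Proof. by rewrite uwalk_cat => /andP [h1 h2]; exists (walk_end v s1). Qed.

Lemma uwalk_rev v s w : uwalk v s w -> uwalk w (rev_walk s) v.
Proof.
elim: s v => [|c s IH] v /=; first by move/eqP ->; rewrite /rev_walk /= eqxx.
case/andP => /eqP h1 /IH h2; rewrite /rev_walk /= rev_cons -cats1.
by apply: (uwalk_catI h2) => /=; rewrite ends_flip /= h1 !eqxx.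
Qed.

Lemma reduced_cons c s : reduced (c :: s) -> reduced s.
Proof. by case/andP. Qed.

Lemma reduced_catl s1 s2 : reduced (s1 ++ s2) -> reduced s1.
Proof.
elim: s1 => [|c s1 IH] //= /andP [h1 h2]; rewrite (IH h2) andbT.
by case: s1 h1 {IH h2}.
Qed.

Lemma reduced_rcons s c :
  reduced (rcons s c) = reduced s && (if rev s is d :: _ then d.1 != c.1 else true).
Proof.
elim: s => [|d s IH] //=; rewrite IH rev_cons.
case: s IH => [|d' s] //= IH; first by rewrite andbT.
by rewrite rev_cons; case: (rev s) => [|x r] /=; rewrite !andbA.
Qed.

Lemma reduced_catI s1 c d s2 : reduced (rcons s1 c) -> reduced (d :: s2) -> c.1 != d.1 ->
  reduced (rcons s1 c ++ d :: s2).
Proof.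
elim: s1 => [|x s1 IH] /=; first by move=> _ -> ->.
case/andP=> h1 h2 h3 h4; rewrite (IH h2 h3 h4) andbT.
by case: s1 h1 {IH h2}.
Qed.

Lemma reduced_rev s : reduced s -> reduced (rev_walk s).
Proof.
elim: s => [|c s IH] //= /andP [h1 h2]; rewrite /rev_walk /= rev_cons.
rewrite reduced_rcons (IH h2) /=; case: s h1 {IH h2} => [|d s] //= h1.
by rewrite rev_cons rev_rcons /= eq_sym.
Qed.

Definition uadj_in (F : pred E) : rel V := fun u w =>
  [exists e, F e && (((talpha e == u) && (tomega e == w))
                     || ((talpha e == w) && (tomega e == u)))].

Lemma uadj_in_sym F : symmetric (uadj_in F).
Proof. by move=> u w; apply/existsP/existsP => -[e he]; exists e; rewrite orbC. Qed.

Lemma connect_uadj_in_sym F : connect_sym (uadj_in F).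
Proof. exact/sym_connect_sym/uadj_in_sym. Qed.

Lemma uwalk_connect F v s w : uwalk v s w -> all (fun c => F c.1) s ->
  connect (uadj_in F) v w.
Proof.
elim: s v => [|c s IH] v /=; first by move/eqP ->.
case/andP => /eqP h1 h2 /andP [h3 h4].
apply: (connect_trans _ (IH _ h2 h4)); apply: connect1.
apply/existsP; exists c.1; rewrite h3 -h1 /ends.
by case: c.2; rewrite !eqxx ?orbT.
Qed.

Section SpanningCount.
Variables (F : pred E) (r : V) (e0 : E).
Hypothesis connected_F : forall u, connect (uadj_in F) r u.

Definition ball k : {set V} :=
  iter k (fun S => S :|: [set w | [exists u in S, uadj_in F u w]]) [set r].

Lemma ball_adj k u w : u \in ball k -> uadj_in F u w -> w \in ball k.+1.
Proof.
move=> hu huw; rewrite /ball /= -/(ball k) in_setU inE.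
by apply/orP; right; apply/existsP; exists u; rewrite hu.
Qed.

Lemma ball_path p y k : y \in ball k -> path (uadj_in F) y p ->
  last y p \in ball (k + size p).
Proof.
elim: p y k => [|x p IH] y k /=; first by rewrite addn0.
by move=> hy /andP [h1 h2]; rewrite addnS -addSn; apply: IH (ball_adj hy h1) h2.
Qed.

Lemma in_some_ball u : exists k, u \in ball k.
Proof.
have [p hp ->] := connectP (connected_F u).
by exists (0 + size p); apply: ball_path; rewrite ?set11.
Qed.

Definition dist u := ex_minn (in_some_ball u).

Lemma dist_ball u : u \in ball (dist u).
Proof. by rewrite /dist; case: ex_minnP. Qed.

Lemma dist_min u k : u \in ball k -> dist u <= k.
Proof. by rewrite /dist; case: ex_minnP => m _; apply. Qed.

Definition parent_step u e := F e &&
  (((talpha e == u) && (dist (tomega e) < dist u)) ||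
   ((tomega e == u) && (dist (talpha e) < dist u))).

Lemma exists_parent_step u : u != r -> exists e, parent_step u e.
Proof.
move=> hu; rewrite /parent_step; have hd := dist_ball u.
case hk: (dist u) hd => [|k] hd.
  by move: hd; rewrite /ball /= inE => /eqP h; rewrite h eqxx in hu.
have hnk : u \notin ball k by apply/negP => /dist_min; rewrite hk ltnn.
move: hd; rewrite /ball /= -/(ball k) in_setU (negbTE hnk) /= inE.
case/existsP => x /andP [hx /existsP [e /andP [he hx2]]].
have hdx : dist x < k.+1 by rewrite ltnS; apply: dist_min.
exists e; rewrite he /=.
by case/orP: hx2 => /andP [/eqP h1 /eqP h2]; rewrite h1 h2 hdx eqxx ?orbT.
Qed.

Definition parent_edge u := odflt e0 [pick e | parent_step u e].

Lemma parent_edgeP u : u != r -> parent_step u (parent_edge u).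
Proof.
move=> /exists_parent_step [e he]; rewrite /parent_edge.
by case: pickP => [//|h]; rewrite h in he.
Qed.

(* Each vertex other than the root has an edge towards a vertex strictly closer
   to it, and these edges are pairwise distinct. *)
Lemma card_V_le_edges : #|V| <= #|[pred e | F e]|.+1.
Proof.
have hinj : {in predC1 r &, injective parent_edge}.
  move=> u w hu hw heq; apply/eqP; apply/negPn/negP => hne.
  have := parent_edgeP hu; have := parent_edgeP hw; rewrite /parent_step heq.
  case/andP=> _ /orP [] /andP [/eqP h1 h2] /andP [_ /orP [] /andP [/eqP h3 h4]];
    rewrite ?h1 ?h3 in h2 h4.
  - by rewrite -h1 -h3 eqxx in hne.
  - by have := ltn_trans h2 h4; rewrite ltnn.
  - by have := ltn_trans h2 h4; rewrite ltnn.
  - by rewrite -h1 -h3 eqxx in hne.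
have := card_in_imset hinj; rewrite cardC1 => h.
have hsub : parent_edge @: predC1 r \subset [set e | F e].
  apply/subsetP => x /imsetP [u hu ->]; rewrite inE.
  by case/andP: (parent_edgeP hu).
have := subset_leq_card hsub; rewrite h cardsE.
have : 0 < #|V| by apply/card_gt0P; exists r.
by case: #|V|.
Qed.

End SpanningCount.

Lemma reduced_cycle_edge n : forall s v, size s <= n -> uwalk v s v -> reduced s ->
  s != [::] -> exists e, connect (uadj_in (predC1 e)) (talpha e) (tomega e).
Proof.
elim: n => [|n IH] [|c s1] v //= hsz /andP [/eqP hv hw] hred _.
case he: (c.1 \in map fst s1).
  case/mapP: he => c' hc' hcc.
  case/splitPr: hc' hw hred hsz => q r' hw hred hsz.
  have [m [hq /= /andP [/eqP hm hr]]] := uwalk_catE hw.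
  have hsq : size q < n by move: hsz; rewrite size_cat /=; lia.
  case: c c' hcc hv hm hq hred {hw hr hsz} => e b [e' b'] /= hee hv hm hq hred.
  subst e'.
  case hb: (b' == b).
    (* the edge is traversed twice in the same direction: shortcut the cycle *)
    move/eqP: hb => hb; subst b'.
    apply: (IH ((e, b) :: q) v) => //=.
    - by rewrite hv eqxx /= -hv hm.
    - have : reduced (((e, b) :: q) ++ (e, b) :: r') by [].
      exact: reduced_catl.
  (* traversed in opposite directions: the walk [q] in between is a shorter cycle *)
  have hb' : b' = ~~ b by case: b b' hb {hv hm hq hred hsq} => [] [].
  subst b'.
  case: q hq hred hsq => [|d q] hq hred hsq.
    by move: hred => /= /andP []; rewrite eqxx.
  apply: (IH (d :: q) (ends (e, b)).2) => //.
  - exact: ltnW.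
  - by move: hq; rewrite -hm; clear hm; rewrite /ends /=; case: b {hv hred hsq hb}.
  - by move: hred => /andP [_] /reduced_catl.
exists c.1.
have hall : all (fun d => predC1 c.1 d.1) s1.
  apply/allP => d hd /=; apply/negP => /eqP hdc.
  by move: he; rewrite -hdc (map_f fst hd).
have := uwalk_connect hw hall.
by rewrite -hv /ends; case: c.2; rewrite //= connect_uadj_in_sym.
Qed.

Hypothesis Htree : is_tree X.

Lemma reduced_cycle_nil v s : uwalk v s v -> reduced s -> s = [::].
Proof.
case: Htree => hc hcard _ hw hred; apply/eqP/negPn/negP => hne.
have [e he] := reduced_cycle_edge (leqnn _) hw hred hne.
have hc' u w : connect (uadj_in (predC1 e)) u w.
  apply: (connect_sub _ (hc u w)) => a b /existsP [f hf].
  case: (f =P e) => [hfe|hfe].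
    subst f; case/orP: hf => /andP [/eqP <- /eqP <-] //.
    by rewrite connect_uadj_in_sym.
  by apply: connect1; apply/existsP; exists f; rewrite /= hf andbT; apply/eqP.
have := @card_V_le_edges (predC1 e) (talpha e) e (hc' (talpha e)).
have -> : #|[pred f | predC1 e f]| = #|E|.-1 by rewrite -(cardC1 e); apply: eq_card.
rewrite -hcard; have : 0 < #|E| by apply/card_gt0P; exists e.
by case: #|E| => // k _; rewrite ltnn.
Qed.

Lemma tree_no_loop (e : E) : talpha e != tomega e.
Proof.
apply/negP => /eqP h.
by have := @reduced_cycle_nil (talpha e) [:: (e, true)]; rewrite /= h !eqxx => /(_ isT isT).
Qed.

Lemma reduced_walk_uniq v s w s' :
  uwalk v s w -> reduced s -> uwalk v s' w -> reduced s' -> s = s'.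
Proof.
elim: s v s' => [|c s1 IH] v [|c' s1'] //=.
- by move/eqP=> -> _ hw hred; symmetry; apply: (@reduced_cycle_nil w (c' :: s1')).
- by move=> hw hred /eqP hvw _; subst w; apply: (@reduced_cycle_nil v (c :: s1)).
move=> /andP [/eqP hv hw] hred /andP [/eqP hv' hw'] hred'.
case: (c =P c') => [hcc|hcc].
  subst c'; congr cons; apply: (IH (ends c).2) => //.
  - exact: reduced_cons hred.
  - exact: reduced_cons hred'.
exfalso.
case: (c.1 =P c'.1) => [he|he].
  (* same edge, opposite directions from the same vertex: a loop *)
  have hc' : c' = flip_step c.
    case: c c' he hcc {hv hv' hw hw' hred hred'} => e b [e' b'] /= <- hne.
    by rewrite /flip_step /=; case: b b' hne => [] [].
  move: hv'; rewrite hc' ends_flip /= => hv'.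
  move: (tree_no_loop c.1); rewrite /ends in hv hv'.
  by case: c.2 hv hv' => /= -> ->; rewrite eqxx.
(* otherwise going out along one walk and back along the other is a reduced cycle *)
have hW : uwalk w (rev_walk (c' :: s1') ++ c :: s1) w.
  apply: (uwalk_catI (uwalk_rev (v := v) (s := c' :: s1') _)) => /=.
    by rewrite hv' eqxx hw'.
  by rewrite hv eqxx hw.
have hR : reduced (rev_walk (c' :: s1') ++ c :: s1).
  have -> : rev_walk (c' :: s1') = rcons (rev_walk s1') (flip_step c').
    by rewrite /rev_walk /= rev_cons.
  apply: reduced_catI => //; last by apply/eqP => h; apply: he.
  by have := reduced_rev (s := c' :: s1') hred'; rewrite /rev_walk /= rev_cons.
by have := reduced_cycle_nil hW hR; case: (rev_walk _).
Qed.

Definition walk_verts v (s : seq (E * bool)) := v :: map (fun c => (ends c).2) s.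

Lemma walk_verts_prefix u x s w : u \in walk_verts x s -> uwalk x s w ->
  exists s1 s2, s = s1 ++ s2 /\ uwalk x s1 u.
Proof.
rewrite /walk_verts; elim: s x => [|c s IH] x /=.
  by rewrite mem_seq1 => /eqP -> _; exists [::], [::]; rewrite /= eqxx.
rewrite in_cons => /orP [/eqP -> _|hu /andP [/eqP hx hw]].
  by exists [::], (c :: s); rewrite /= eqxx.
have [s1 [s2 [-> h]]] := IH _ hu hw.
by exists (c :: s1), s2; rewrite /= hx eqxx.
Qed.

Lemma reduced_walk_verts_uniq v s w : uwalk v s w -> reduced s -> uniq (walk_verts v s).
Proof.
elim: s v => [|c s IH] v //= /andP [/eqP hv hw] hred.
have := IH _ hw (reduced_cons hred); rewrite /walk_verts /= => ->; rewrite andbT.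
apply/negP => hin.
have [s1 [s2 [hs h1]]] := walk_verts_prefix hin hw.
have := @reduced_cycle_nil v (c :: s1); rewrite /= hv eqxx h1 => /(_ isT).
have : reduced ((c :: s1) ++ s2) by rewrite /= -hs.
by move/reduced_catl => h2 /(_ h2).
Qed.

Lemma reduced_walk_size v s w : uwalk v s w -> reduced s -> size s <= #|E|.
Proof.
move=> hw hred; have /card_uniqP hu := reduced_walk_verts_uniq hw hred.
case: Htree => _ hcard _.
by have := max_card (mem (walk_verts v s)); rewrite hu /= size_map -hcard ltnS.
Qed.

Definition fwd (es : seq E) := map (fun e => (e, true)) es.

Lemma dwalk_uwalk v es w : dwalk Sigma X v es w = uwalk v (fwd es) w.
Proof. by elim: es v => [|e es IH] v //=; rewrite IH. Qed.

Lemma dwalk_reduced v es w : dwalk Sigma X v es w -> reduced (fwd es).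
Proof.
elim: es v => [|e es IH] v //= /andP [_ h]; rewrite (IH _ h) andbT.
case: es h {IH} => [|f es] //= /andP [/eqP hf _]; apply/eqP => hef.
by move: (tree_no_loop e); rewrite -hf hef eqxx.
Qed.

Lemma dwalk_uniq v es es' w :
  dwalk Sigma X v es w -> dwalk Sigma X v es' w -> es = es'.
Proof.
move=> h h'; have hr := dwalk_reduced h; have hr' := dwalk_reduced h'.
rewrite dwalk_uwalk in h; rewrite dwalk_uwalk in h'.
have hi : injective (fun e : E => (e, true)) by move=> a b [].
exact: (inj_map hi (reduced_walk_uniq h hr h' hr')).
Qed.

Lemma dwalk_loop_nil v es : dwalk Sigma X v es v -> es = [::].
Proof. by move=> h; symmetry; apply: (dwalk_uniq (es := [::]) _ h); rewrite /= eqxx. Qed.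

Lemma dwalk_catE v s1 s2 w : dwalk Sigma X v (s1 ++ s2) w ->
  exists m, dwalk Sigma X v s1 m /\ dwalk Sigma X m s2 w.
Proof.
by rewrite dwalk_uwalk /fwd map_cat => /uwalk_catE [m]; rewrite -!dwalk_uwalk; exists m.
Qed.

Lemma dwalk_catI v s1 m s2 w :
  dwalk Sigma X v s1 m -> dwalk Sigma X m s2 w -> dwalk Sigma X v (s1 ++ s2) w.
Proof. by rewrite !dwalk_uwalk /fwd map_cat; apply: uwalk_catI. Qed.

Definition incident (e : E) (v : V) := (talpha e == v) || (tomega e == v).

Lemma dwalk_edge_at (v0 : V) (p s : seq E) (w m : V) (f : E) :
  dwalk Sigma X v0 p m -> dwalk Sigma X m s w -> f \in p ++ s -> incident f m ->
  (Some f == ohead s) || (Some f == ohead (rev p)).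
Proof.
move=> hp hs; rewrite mem_cat => /orP [] hf hinc.
  case/splitPr: hf hp => p1 p2 hp.
  case: p2 hp => [|a p2] hp; first by rewrite rev_cat /= eqxx orbT.
  have [x [_ /= /andP [/eqP hx hr]]] := dwalk_catE hp.
  exfalso; case/orP: hinc => /eqP hm.
    by have := @dwalk_loop_nil m (f :: a :: p2); rewrite /= hm eqxx hr => /(_ isT).
  by rewrite hm in hr; have := @dwalk_loop_nil m (a :: p2) hr.
case/splitPr: hf hs => s1 s2 hs.
case: s1 hs => [|a s1] hs; first by rewrite /= eqxx.
have [x [h1 /= /andP [/eqP hx hr]]] := dwalk_catE hs.
exfalso; case/orP: hinc => /eqP hm.
  by rewrite -hx hm in h1; have := dwalk_loop_nil h1.
have h2 : dwalk Sigma X m (rcons (a :: s1) f) m.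
  by rewrite -cats1; apply: (dwalk_catI h1); rewrite /= hx hm !eqxx.
by have := dwalk_loop_nil h2; case: s1 {h1 h2 hs}.
Qed.

End Walks.

Section Tau.
Variable M : adequate_monoid.
Variable Sigma : Type.
Variable chi : Sigma -> M.
Local Notation "a * b" := (amul a b).

Section OneTree.
Variable X : tree Sigma.
Local Notation V := (tV X).
Local Notation E := (tE X).
Local Notation rho_aux := (rho_aux Sigma M chi X).
Local Notation tau_trunk := (tau_trunk Sigma M chi X).
Local Notation dwalk := (dwalk Sigma X).

Fixpoint tauI (n : nat) (v : V) (excl : pred E) : idemT M :=
  if n is n'.+1 then
    imul
      (\big[@imul M/ione M]_(e | ~~ excl e && (talpha e == v))
          aplusI (chi (tlab e) * ival (tauI n' (tomega e) (pred1 e))))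
      (\big[@imul M/ione M]_(e | ~~ excl e && (tomega e == v))
          astarI (ival (tauI n' (talpha e) (pred1 e)) * chi (tlab e)))
  else ione M.

Lemma tau_atE n v excl : tau_at Sigma M chi X n v excl = ival (tauI n v excl).
Proof.
elim: n v excl => [|n IH] v excl //=.
by rewrite !big_ival; congr amul; apply: eq_bigr => e _ /=; rewrite IH.
Qed.

Lemma tauI_excl n v ex1 ex2 :
  (forall e, incident e v -> ex1 e = ex2 e) -> tauI n v ex1 = tauI n v ex2.
Proof.
case: n => [|n] // h /=; congr imul; apply: eq_bigl => e.
  by case he: (talpha e == v); rewrite ?andbF ?andbT // h /incident ?he.
by case he: (tomega e == v); rewrite ?andbF ?andbT // h /incident ?he ?orbT.
Qed.

Lemma tauI_add_out_edge n v excl ex e :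
  (forall f, incident f v -> excl f = ex f && (f != e)) ->
  ex e -> talpha e = v -> tomega e != v ->
  tauI n.+1 v excl =
  imul (tauI n.+1 v ex) (aplusI (chi (tlab e) * ival (tauI n (tomega e) (pred1 e)))).
Proof.
move=> hex exe he hev /=.
rewrite (bigD1 e) /=; last by rewrite hex /incident he eqxx // eqxx andbF.
rewrite [imul (aplusI _) _]imulC -imulA [imul (aplusI _) _]imulC imulA.
congr (imul (imul _ _) _).
- apply: eq_bigl => f; case hv: (talpha f == v); rewrite ?andbF // !andbT.
  rewrite hex /incident ?hv //.
  by case: eqP => [->|_]; rewrite ?exe ?andbT.
- apply: eq_bigl => f; case hv: (tomega f == v); rewrite ?andbF // !andbT.
  rewrite hex /incident ?hv ?orbT //; case: eqP => [hfe|_]; last by rewrite andbT.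
  by move: hv; rewrite hfe (negbTE hev).
Qed.

Lemma tauI_add_in_edge n v excl ex e :
  (forall f, incident f v -> excl f = ex f && (f != e)) ->
  ex e -> tomega e = v -> talpha e != v ->
  tauI n.+1 v excl =
  imul (astarI (ival (tauI n (talpha e) (pred1 e)) * chi (tlab e))) (tauI n.+1 v ex).
Proof.
move=> hex exe he hev /=.
rewrite [X in imul _ X](bigD1 e) /=; last by rewrite hex /incident he eqxx ?orbT // eqxx andbF.
rewrite imulA [imul _ (astarI _)]imulC -imulA; congr imul; congr imul.
- apply: eq_bigl => f; case hv: (talpha f == v); rewrite ?andbF // !andbT.
  rewrite hex /incident ?hv //; case: eqP => [hfe|_]; last by rewrite andbT.
  by move: hv; rewrite hfe (negbTE hev).
- apply: eq_bigl => f; case hv: (tomega f == v); rewrite ?andbF // !andbT.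
  rewrite hex /incident ?hv ?orbT //.
  by case: eqP => [->|_]; rewrite ?exe ?andbT.
Qed.

(* The recursion depth needed at [v]: [tauI] stabilises beyond it. *)
Definition reduced_walks_shorter k (v : V) (excl : pred E) :=
  forall s w, uwalk v s w -> reduced s -> head_notin excl s -> size s < k.

Lemma reduced_walks_shorter_child k v excl e b :
  reduced_walks_shorter k.+1 v excl -> ~~ excl e -> (ends (e, b)).1 = v ->
  reduced_walks_shorter k (ends (e, b)).2 (pred1 e).
Proof.
move=> hW he hv s w hw hred hh.
have := hW ((e, b) :: s) w; rewrite /= hv eqxx hw he ltnS.
case: s hw hred hh => [|d s] hw hred /= hde; first by apply.
by rewrite eq_sym hde; apply.
Qed.

Lemma tauI_fuel_walks n v excl m :
  reduced_walks_shorter n.+1 v excl -> n <= m -> tauI n v excl = tauI m v excl.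
Proof.
elim: n v excl m => [|n IH] v excl [|m] hW //= hnm.
  have hnone b e : (~~ excl e && ((ends (e, b)).1 == v)) = false.
    apply/negP => /andP [he /eqP hv].
    by have := hW [:: (e, b)] (ends (e, b)).2; rewrite /= hv !eqxx he => /(_ isT isT isT).
  rewrite (eq_bigl _ _ (hnone true)) (eq_bigl _ _ (hnone false)) !big_pred0 //.
  by apply: ival_inj; rewrite /= amul1.
congr imul; apply: eq_bigr => e /andP [he /eqP hv]; rewrite (IH _ _ m) //.
- exact: (@reduced_walks_shorter_child n.+1 v excl e true).
- exact: (@reduced_walks_shorter_child n.+1 v excl e false).
Qed.

Hypothesis Htree : is_tree X.

Lemma tauI_fuel n m v excl : #|E| <= n -> n <= m -> tauI n v excl = tauI m v excl.
Proof.
move=> hn; apply: tauI_fuel_walks => s w hw hred _.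
by rewrite ltnS; apply: leq_trans (reduced_walk_size Htree hw hred) hn.
Qed.

Local Notation tX := (trunk Sigma X).
Local Notation in_trunk := (fun f => f \in tX).

Lemma trunkP : dwalk (tstart X) tX (tend X).
Proof.
case: Htree => _ _ [es h]; rewrite /trunk.
by apply: (epsilon_spec (inhabits [::]) (fun es => dwalk (tstart X) es (tend X))); exists es.
Qed.

Lemma tau_trunkE v : tau_trunk v = ival (tauI #|E| v in_trunk).
Proof. exact: tau_atE. Qed.

Lemma tau_trunk_idem v : idempotent_el (@amul M) (tau_trunk v).
Proof. by rewrite tau_trunkE; apply: ivalP. Qed.

Lemma tauI_trunk_end n v excl :
  (forall e, incident e v -> excl e = (e \in tX)) -> #|E| <= n ->
  ival (tauI n v excl) = tau_trunk v.
Proof.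
by move=> hex hn; rewrite tau_trunkE (tauI_excl _ hex) (@tauI_fuel #|E| n) ?leqnn.
Qed.

Lemma rho_aux_rcons v p e :
  rho_aux v (rcons p e) = rho_aux v p * (chi (tlab e) * tau_trunk (tomega e)).
Proof. by elim: p v => [|f p IH] v //=; rewrite IH !amulA. Qed.

(* At a trunk vertex [v] splitting the trunk into [p ++ s], re-including the first
   edge of [s] in the tree hanging at [v] yields the (+) of the rest of [rho]. *)
Lemma tauI_trunk_suffix s : forall p v excl n, p ++ s = tX ->
  dwalk (tstart X) p v -> dwalk v s (tend X) ->
  (forall e, incident e v -> excl e = (e \in tX) && (Some e != ohead s)) ->
  #|E| <= n -> ival (tauI n v excl) = aplus (rho_aux v s).
Proof.
elim: s => [|e s IH] p v excl n hps hp hs hex hn.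
  rewrite aplus_idem; last exact: tau_trunk_idem.
  by apply: tauI_trunk_end hn => f /hex; rewrite andbT.
move: hs => /= /andP [/eqP he hs].
have heT : e \in tX by rewrite -hps mem_cat in_cons eqxx orbT.
have hp' : dwalk (tstart X) (rcons p e) (tomega e).
  by rewrite -cats1; apply: (dwalk_catI hp); rewrite /= he !eqxx.
have hev : tomega e != v by rewrite -he eq_sym (tree_no_loop Htree).
have hexcl f : incident f v -> excl f = (f \in tX) && (f != e).
  by move=> /hex ->; rewrite /= (inj_eq (@Some_inj _)).
rewrite (tauI_fuel _ _ hn (leqnSn n)) (tauI_add_out_edge n hexcl heT he hev).
rewrite aplus_idemMl; last exact: tau_trunk_idem.
rewrite aplus_mul_aplus ival_imul ival_aplusI.
rewrite (tauI_trunk_end _ (leqW hn)) //; congr (_ * aplus (_ * _)).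
have hex_next f : incident f (tomega e) -> pred1 e f = (f \in tX) && (Some f != ohead s).
  move=> hf /=; case: (f =P e) => [->|hfe].
    rewrite heT /=; case: s hs {IH hps hex} => [|g s] //= /andP [/eqP hg _].
    rewrite (inj_eq (@Some_inj _)); apply/esym/negP => /eqP hge.
    by move: (tree_no_loop Htree e); rewrite -hg hge eqxx.
  case hfT: (f \in tX) => //=.
  have := dwalk_edge_at Htree hp' hs (f := f).
  rewrite cat_rcons hps hfT => /(_ isT hf); rewrite rev_rcons /= !(inj_eq (@Some_inj _)).
  by move/eqP: hfe => /negbTE ->; rewrite orbF => ->.
by apply: (IH (rcons p e)); rewrite ?cat_rcons.
Qed.

Lemma tauI_trunk_prefix p : forall v excl n s, p ++ s = tX ->
  dwalk (tstart X) p v -> dwalk v s (tend X) ->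
  (forall e, incident e v -> excl e = (e \in tX) && (Some e != ohead (rev p))) ->
  #|E| <= n -> ival (tauI n v excl) = astar (rho_aux (tstart X) p).
Proof.
elim/last_ind: p => [|p e IH] v excl n s hps hp hs hex hn.
  move: hp => /= /eqP hv; subst v.
  rewrite astar_idem; last exact: tau_trunk_idem.
  by apply: tauI_trunk_end hn => f /hex; rewrite andbT.
have [u [hp' /= /andP [/eqP he /eqP hv]]] : exists u, dwalk (tstart X) p u /\ dwalk u [:: e] v.
  by apply: dwalk_catE; rewrite cats1.
subst v.
have heT : e \in tX by rewrite -hps mem_cat mem_rcons in_cons eqxx.
have hexcl f : incident f (tomega e) -> excl f = (f \in tX) && (f != e).
  by move=> /hex ->; rewrite rev_rcons /= (inj_eq (@Some_inj _)).
rewrite (tauI_fuel _ _ hn (leqnSn n)) (tauI_add_in_edge n hexcl heT erefl (tree_no_loop Htree e)).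
rewrite rho_aux_rcons amulA astar_idemMr; last exact: tau_trunk_idem.
rewrite astar_astar_mul ival_imul ival_astarI.
rewrite (tauI_trunk_end _ (leqW hn)) //; congr (astar (_ * _) * _).
have hs' : dwalk u (e :: s) (tend X) by rewrite /= he eqxx hs.
have hex_prev f : incident f u -> pred1 e f = (f \in tX) && (Some f != ohead (rev p)).
  move=> hf /=; case: (f =P e) => [->|hfe].
    rewrite heT /=.
    case/lastP: p hp' {IH hps hex hp} => [|p g] hp' //.
    have [x [_ /= /andP [/eqP hg /eqP hgo]]] :
        exists x, dwalk (tstart X) p x /\ dwalk x [:: g] u.
      by apply: dwalk_catE; rewrite cats1.
    rewrite rev_rcons /= (inj_eq (@Some_inj _)); apply/esym/negP => /eqP hge.
    by subst g; move: (tree_no_loop Htree e); rewrite he hgo eqxx.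
  case hfT: (f \in tX) => //=.
  have := dwalk_edge_at Htree hp' hs' (f := f).
  rewrite -cats1 -catA /= in hps.
  rewrite hps hfT => /(_ isT hf) /=; rewrite !(inj_eq (@Some_inj _)).
  by move/eqP: hfe => /negbTE ->; rewrite /= => /eqP ->; rewrite eqxx.
by rewrite he; apply: (IH u _ _ (e :: s)); rewrite // -hps -cats1 -catA.
Qed.

End OneTree.
End Tau.

Section Reroot.
Variable M : adequate_monoid.
Variable Sigma : Type.
Variable chi : Sigma -> M.
Variable X : tree Sigma.
Hypothesis Htree : is_tree X.

Lemma tplus_tree : is_tree (tplus X).
Proof. by case: Htree => hc hcard _; split => //; exists [::]; exact: eqxx. Qed.

Lemma tstar_tree : is_tree (tstar X).
Proof. by case: Htree => hc hcard _; split => //; exists [::]; exact: eqxx. Qed.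

Lemma trunk_tplus : trunk Sigma (tplus X) = [::].
Proof. exact: dwalk_loop_nil tplus_tree _ _ (trunkP tplus_tree). Qed.

Lemma trunk_tstar : trunk Sigma (tstar X) = [::].
Proof. exact: dwalk_loop_nil tstar_tree _ _ (trunkP tstar_tree). Qed.

Lemma tau_at_tplus n v excl :
  tau_at Sigma M chi (tplus X) n v excl = tau_at Sigma M chi X n v excl.
Proof. by elim: n v excl => [|n IH] v excl //=; congr amul; apply: eq_bigr => e _; rewrite IH. Qed.

Lemma tau_at_tstar n v excl :
  tau_at Sigma M chi (tstar X) n v excl = tau_at Sigma M chi X n v excl.
Proof. by elim: n v excl => [|n IH] v excl //=; congr amul; apply: eq_bigr => e _; rewrite IH. Qed.

Lemma rho_tplus : rho chi (tplus X) = aplus (rho chi X).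
Proof.
rewrite /rho trunk_tplus /= /tau_trunk tau_at_tplus trunk_tplus tau_atE.
apply: (@tauI_trunk_suffix M Sigma chi X Htree _ [::]) => //=; first exact: trunkP.
move=> e he; case hT: (e \in trunk Sigma X) => //=.
have := dwalk_edge_at Htree (p := [::]) (eqxx (tstart X)) (trunkP Htree) (f := e).
by rewrite /= hT => /(_ isT he); rewrite orbF => ->.
Qed.

Lemma rho_tstar : rho chi (tstar X) = astar (rho chi X).
Proof.
rewrite /rho trunk_tstar /= /tau_trunk tau_at_tstar trunk_tstar tau_atE.
apply: (@tauI_trunk_prefix M Sigma chi X Htree _ (tend X) _ _ [::]) => //.
- by rewrite cats0.
- exact: trunkP.
- exact: eqxx.
move=> e he; case hT: (e \in trunk Sigma X) => //=.
have := dwalk_edge_at Htree (trunkP Htree) (s := [::]) (eqxx (tend X)) (f := e).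
by rewrite cats0 hT => /(_ isT he) /= => ->.
Qed.

End Reroot.

Lemma rho_ttriv (M : adequate_monoid) (Sigma : Type) (chi : Sigma -> M) :
  rho chi (ttriv Sigma) = aone M.
Proof.
rewrite /rho; case: (trunk _ _) => [|[]] /=.
by rewrite /tau_trunk (_ : #|tE (ttriv Sigma)| = 0) ?card_void.
Qed.

Lemma big_reindex_inj (R : Type) (idx : R) (op : Monoid.com_law idx) (I J : finType)
  (h : I -> J) (PI : pred I) (PJ : pred J) (F : J -> R) :
  injective h -> (forall j, PJ j -> exists i, h i = j) -> (forall i, PJ (h i) = PI i) ->
  \big[op/idx]_(j | PJ j) F j = \big[op/idx]_(i | PI i) F (h i).
Proof.
move=> hinj hsurj hP.
transitivity (\big[op/idx]_(i in [set i | PJ (h i)]) F (h i)); last first.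
  by apply: eq_bigl => i; rewrite inE hP.
rewrite -big_imset; last by move=> x y _ _; apply: hinj.
apply: eq_bigl => j; apply/idP/imsetP => [hj|[i hi ->]]; last by rewrite inE in hi.
by have [i hi] := hsurj j hj; exists i; rewrite // inE hi.
Qed.

Lemma connect_homo (A B : finType) (eA : rel A) (eB : rel B) (h : A -> B) :
  (forall x y, eA x y -> eB (h x) (h y)) ->
  forall x y, connect eA x y -> connect eB (h x) (h y).
Proof.
move=> H x y /connectP [p hp ->]; elim: p x hp => [|z p IH] x /=; first by rewrite connect0.
by case/andP => h1 h2; apply: connect_trans (connect1 (H _ _ h1)) (IH _ h2).
Qed.

Section Embedding.
Variable M : adequate_monoid.
Variable Sigma : Type.
Variable chi : Sigma -> M.
Variables A B : tree Sigma.
Variable f : tV A -> tV B.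
Variable g : tE A -> tE B.
Variable bad : pred (tV A).
Hypothesis f_inj : injective f.
Hypothesis g_inj : injective g.
Hypothesis g_alpha : forall e, talpha (g e) = f (talpha e).
Hypothesis g_omega : forall e, tomega (g e) = f (tomega e).
Hypothesis g_lab : forall e, tlab (g e) = tlab e.
Hypothesis g_onto : forall a eB, ~~ bad a -> (talpha eB == f a) || (tomega eB == f a) ->
  exists eA, g eA = eB.

Definition reduced_walks_avoid (a : tV A) (excl : pred (tE A)) :=
  forall s w, uwalk a s w -> reduced s -> head_notin excl s -> ~~ bad w.

Lemma reduced_walks_avoid_child a excl e b :
  reduced_walks_avoid a excl -> ~~ excl e -> (ends (e, b)).1 = a ->
  reduced_walks_avoid (ends (e, b)).2 (pred1 e).
Proof.
move=> hA he ha s w hw hred hh; apply: (hA ((e, b) :: s)); rewrite /= ?ha ?eqxx //.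
by rewrite hred andbT; case: s hw hred hh => [|d s] //= _ _; rewrite eq_sym.
Qed.

Lemma tauI_embed n a exA exB : (forall e, exB (g e) = exA e) ->
  reduced_walks_avoid a exA -> tauI chi n (f a) exB = tauI chi n a exA.
Proof.
elim: n a exA exB => [|n IH] a exA exB hex hA //=.
have hgood : ~~ bad a by apply: (hA [::]); rewrite /= ?eqxx.
congr imul.
  rewrite (@big_reindex_inj _ _ _ _ _ g (fun e => ~~ exA e && (talpha e == a))) //.
  - apply: eq_bigr => e /andP [he /eqP ha].
    rewrite g_lab g_omega (IH _ (pred1 e)) //.
      by move=> e'; rewrite /= (inj_eq g_inj).
    exact: (@reduced_walks_avoid_child a exA e true).
  - by move=> eB /andP [_ ha]; apply: g_onto hgood _; rewrite ha.
  - by move=> e; rewrite hex g_alpha (inj_eq f_inj).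
rewrite (@big_reindex_inj _ _ _ _ _ g (fun e => ~~ exA e && (tomega e == a))) //.
- apply: eq_bigr => e /andP [he /eqP ha].
  rewrite g_lab g_alpha (IH _ (pred1 e)) //.
    by move=> e'; rewrite /= (inj_eq g_inj).
  exact: (@reduced_walks_avoid_child a exA e false).
- by move=> eB /andP [_ ha]; apply: g_onto hgood _; rewrite ha orbT.
- by move=> e; rewrite hex g_omega (inj_eq f_inj).
Qed.

End Embedding.

(* The target is reached only along the (unique) reduced walk [c], all of whose
   edges are excluded. *)
Lemma reduced_walks_avoid_target (Sigma : Type) (Z : tree Sigma) (HZ : is_tree Z)
  (v t : tV Z) (c : seq (tE Z * bool)) (excl : pred (tE Z)) :
  uwalk v c t -> reduced c -> c != [::] -> all (fun x => excl x.1) c ->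
  reduced_walks_avoid (pred1 t) v excl.
Proof.
move=> hc hred hne hall s w hw hred' hh; apply/negP => /eqP hwt; subst w.
have hsc := reduced_walk_uniq HZ hw hred' hc hred; subst s.
by case: c hc hred hne hall hh hw hred' => [|x c] //= _ _ _ /andP [-> _].
Qed.

Lemma uadj_sym (Sigma : Type) (Z : tree Sigma) : symmetric (uadj Sigma Z).
Proof. by move=> u w; apply/existsP/existsP => -[e he]; exists e; rewrite orbC. Qed.

Section Gluing.
Variable Sigma : Type.
Variables X Y : tree Sigma.
Hypothesis HX : is_tree X.
Hypothesis HY : is_tree Y.
Local Notation T := (tmul X Y).
Local Notation emb := (embY Sigma X Y).
Local Notation tX := (trunk Sigma X).
Local Notation tY := (trunk Sigma Y).

Lemma embY_start : emb (tstart Y) = inl (tend X).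
Proof. by rewrite /embY insubF //= eqxx. Qed.

Lemma embYP v : (v = tstart Y /\ emb v = inl (tend X)) \/
  (exists u, val u = v /\ emb v = inr u).
Proof.
rewrite /embY; case: insubP => [u hu hv|hn]; first by right; exists u.
by left; move/negPn/eqP: hn.
Qed.

Lemma embY_inj : injective emb.
Proof.
move=> a b; case: (embYP a) => [[-> ->]|[u [<- ->]]];
  by case: (embYP b) => [[-> ->]|[u' [<- ->]]] // [->].
Qed.

Lemma embY_inl v x : emb v = inl x -> v = tstart Y /\ x = tend X.
Proof. by case: (embYP v) => [[-> ->] [<-]|[u [_ ->]]]. Qed.

Lemma embY_eq_end v : (emb v == inl (tend X)) = (v == tstart Y).
Proof. by rewrite -embY_start (inj_eq embY_inj). Qed.

Lemma inl_eq_embY x v : x != tend X -> (inl x == emb v) = false.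
Proof.
move=> hx; apply/negP => /eqP h; have [_ h2] := embY_inl (esym h).
by rewrite h2 eqxx in hx.
Qed.

Lemma inl_eq_embY_r (x : tV X) v : v != tstart Y -> (inl x == emb v) = false.
Proof.
move=> hv; apply/negP => /eqP h; have [h1 _] := embY_inl (esym h).
by rewrite h1 eqxx in hv.
Qed.

Lemma dwalk_inl v es w : dwalk Sigma T (inl v) (map inl es) (inl w) = dwalk Sigma X v es w.
Proof. by elim: es v => [|e es IH] v //=; rewrite IH. Qed.

Lemma dwalk_embY v es w : dwalk Sigma T (emb v) (map inr es) (emb w) = dwalk Sigma Y v es w.
Proof.
elim: es v => [|e es IH] v /=; first exact: (inj_eq embY_inj).
by rewrite IH (inj_eq embY_inj).
Qed.

Definition tmul_trunk : seq (tE T) := map inl tX ++ map inr tY.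

Lemma mem_tmul_trunk_inl (e : tE X) : ((inl e : tE T) \in tmul_trunk) = (e \in tX).
Proof.
rewrite mem_cat (mem_map (@inl_inj _ _)); case: (e \in tX) => //=.
by apply/mapP => -[x].
Qed.

Lemma mem_tmul_trunk_inr (e : tE Y) : ((inr e : tE T) \in tmul_trunk) = (e \in tY).
Proof.
rewrite mem_cat (mem_map (@inr_inj _ _)).
by have -> : ((inr e : tE T) \in map inl tX) = false by apply/mapP => -[x].
Qed.

Lemma tmul_trunk_walk : dwalk Sigma T (tstart T) tmul_trunk (tend T).
Proof.
apply: (@dwalk_catI Sigma T _ _ (inl (tend X))); first by rewrite dwalk_inl trunkP.
by rewrite -embY_start dwalk_embY trunkP.
Qed.

Lemma tmul_connect : forall u w : tV T, connect (uadj Sigma T) u w.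
Proof.
case: HX => cX _ _; case: HY => cY _ _.
have to_end a : connect (uadj Sigma T) a (inl (tend X)).
  case: a => [x|u].
    apply: (connect_homo (h := inl) _ (cX x (tend X))) => a b /existsP [e he].
    by apply/existsP; exists (inl e).
  have -> : (inr u : tV T) = emb (val u).
    case: (embYP (val u)) => [[h _]|[u' [hu ->]]]; last by congr inr; apply: val_inj.
    by move: (valP u); rewrite h eqxx.
  rewrite -embY_start.
  apply: (connect_homo (h := emb) _ (cY (val u) (tstart Y))) => a b /existsP [e he].
  by apply/existsP; exists (inr e) => /=; rewrite !(inj_eq embY_inj).
move=> a b; apply: connect_trans (to_end a) _.
by rewrite (sym_connect_sym (@uadj_sym Sigma T)).
Qed.

Lemma tmul_tree : is_tree T.
Proof.
split; [exact: tmul_connect | | by exists tmul_trunk; apply: tmul_trunk_walk].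
case: HX => _ hX _; case: HY => _ hY _.
rewrite /= /tmulV !card_sum card_sig.
have -> : #|[pred x : tV Y | x != tstart Y]| = #|tV Y|.-1.
  by rewrite -(cardC1 (tstart Y)); apply: eq_card.
by rewrite -hX -hY /= addSn.
Qed.

Lemma trunk_tmul : trunk Sigma T = tmul_trunk.
Proof. exact: (dwalk_uniq tmul_tree (trunkP tmul_tree) tmul_trunk_walk). Qed.

End Gluing.

Section TauGluing.
Variable M : adequate_monoid.
Variable Sigma : Type.
Variable chi : Sigma -> M.
Variables X Y : tree Sigma.
Hypothesis HX : is_tree X.
Hypothesis HY : is_tree Y.
Local Notation T := (tmul X Y).
Local Notation emb := (embY Sigma X Y).
Local Notation tX := (trunk Sigma X).
Local Notation tY := (trunk Sigma Y).
Local Notation "a * b" := (amul a b).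
Local Notation tau_trunk := (tau_trunk Sigma M chi).

Lemma cardE_tmul : #|tE T| = #|tE X| + #|tE Y|.
Proof. exact: card_sum. Qed.

Lemma tauI_inl n (a : tV X) exA exB :
  (forall e, exB (inl e) = exA e) -> reduced_walks_avoid (pred1 (tend X)) a exA ->
  tauI chi n (inl a : tV T) exB = tauI chi n a exA.
Proof.
apply: (@tauI_embed M Sigma chi X T inl inl) => //; try exact: inl_inj.
by move=> x [e|e] hx; [exists e | rewrite /= !(eq_sym _ (inl x)) !inl_eq_embY].
Qed.

Lemma tauI_embY n (a : tV Y) exA exB :
  (forall e, exB (inr e) = exA e) -> reduced_walks_avoid (pred1 (tstart Y)) a exA ->
  tauI chi n (emb a : tV T) exB = tauI chi n a exA.
Proof.
apply: (@tauI_embed M Sigma chi Y T emb inr) => //; try exact: embY_inj; try exact: inr_inj.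
by move=> y [e|e] hy; [rewrite /= !inl_eq_embY_r | exists e].
Qed.

Lemma tau_trunk_tmul_inl v p d : p ++ d = tX -> dwalk Sigma X v d (tend X) -> v != tend X ->
  tau_trunk T (inl v) = tau_trunk X v.
Proof.
move=> hpd hd hv; rewrite !tau_trunkE (trunk_tmul HX HY); congr ival.
rewrite (@tauI_inl _ _ (fun f => f \in tX)); last first.
- apply: (@reduced_walks_avoid_target _ _ HX _ _ (fwd d)).
  + by rewrite -dwalk_uwalk.
  + exact: (dwalk_reduced HX hd).
  + by case: d hd {hpd} => //= /eqP h; rewrite h eqxx in hv.
  + by apply/allP => x /mapP [e he ->] /=; rewrite -hpd mem_cat he orbT.
- by move=> e; rewrite mem_tmul_trunk_inl.
by rewrite (@tauI_fuel M Sigma chi X HX #|tE X| #|tE T|) // cardE_tmul leq_addr.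
Qed.

Lemma tau_trunk_tmul_embY w p d : p ++ d = tY -> dwalk Sigma Y (tstart Y) p w -> p != [::] ->
  tau_trunk T (emb w) = tau_trunk Y w.
Proof.
move=> hpd hp hne; rewrite !tau_trunkE (trunk_tmul HX HY); congr ival.
rewrite (@tauI_embY _ _ (fun f => f \in tY)); last first.
- apply: (@reduced_walks_avoid_target _ _ HY _ _ (rev_walk (fwd p))).
  + by apply: uwalk_rev; rewrite -dwalk_uwalk.
  + exact/reduced_rev/(dwalk_reduced HY hp).
  + by case: p hp hne {hpd} => //= e p; rewrite /rev_walk /= rev_cons; case: (rev _).
  + apply/allP => x; rewrite mem_rev => /mapP [y /mapP [e he ->] ->] /=.
    by rewrite -hpd mem_cat he.
- by move=> e; rewrite mem_tmul_trunk_inr.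
by rewrite (@tauI_fuel M Sigma chi Y HY #|tE Y| #|tE T|) // cardE_tmul leq_addl.
Qed.

(* At the glued vertex the hanging tree is the union of the trees of [X] at its end
   and of [Y] at its start. *)
Lemma tau_trunk_tmul_junction :
  tau_trunk T (inl (tend X)) = tau_trunk X (tend X) * tau_trunk Y (tstart Y).
Proof.
rewrite !tau_trunkE (trunk_tmul HX HY).
set N := #|tE T|.
have hNX : #|tE X| <= N.+1 by rewrite /N cardE_tmul; apply/leqW/leq_addr.
have hNY : #|tE Y| <= N.+1 by rewrite /N cardE_tmul; apply/leqW/leq_addl.
rewrite (@tauI_fuel M Sigma chi T (tmul_tree HX HY) N N.+1) //.
rewrite (@tauI_fuel M Sigma chi X HX #|tE X| N.+1) //.
rewrite (@tauI_fuel M Sigma chi Y HY #|tE Y| N.+1) // -ival_imul; congr ival.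
rewrite /= !big_sumType /= -Monoid.mulmACA; congr imul; congr imul.
- apply: eq_big => [e|e /andP [he ha]]; first by rewrite mem_tmul_trunk_inl.
  rewrite (@tauI_inl _ _ (pred1 e)) //.
  apply: (@reduced_walks_avoid_target _ _ HX _ _ [:: (e, false)]) => //=.
  + by move: ha; rewrite (inj_eq (@inl_inj _ _)) eqxx => ->.
  + by rewrite eqxx.
- apply: eq_big => [e|e /andP [he ha]]; first by rewrite mem_tmul_trunk_inl.
  rewrite (@tauI_inl _ _ (pred1 e)) //.
  apply: (@reduced_walks_avoid_target _ _ HX _ _ [:: (e, true)]) => //=.
  + by move: ha; rewrite (inj_eq (@inl_inj _ _)) eqxx => ->.
  + by rewrite eqxx.
- apply: eq_big => [e|e /andP [he ha]]; first by rewrite mem_tmul_trunk_inr embY_eq_end.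
  rewrite (@tauI_embY _ _ (pred1 e)) //.
  apply: (@reduced_walks_avoid_target _ _ HY _ _ [:: (e, false)]) => //=.
  + by move: ha; rewrite embY_eq_end eqxx => ->.
  + by rewrite eqxx.
- apply: eq_big => [e|e /andP [he ha]]; first by rewrite mem_tmul_trunk_inr embY_eq_end.
  rewrite (@tauI_embY _ _ (pred1 e)) //.
  apply: (@reduced_walks_avoid_target _ _ HY _ _ [:: (e, true)]) => //=.
  + by move: ha; rewrite embY_eq_end eqxx => ->.
  + by rewrite eqxx.
Qed.

End TauGluing.

Section RhoGluing.
Variable M : adequate_monoid.
Variable Sigma : Type.
Variable chi : Sigma -> M.
Local Notation "a * b" := (amul a b).
Local Notation rho_aux := (rho_aux Sigma M chi).
Local Notation tau_trunk := (tau_trunk Sigma M chi).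

Fixpoint rho_prefix (Z : tree Sigma) (v : tV Z) (s : seq (tE Z)) : M :=
  if s is e :: s' then tau_trunk Z v * (chi (tlab e) * rho_prefix (tomega e) s')
  else aone M.

Lemma rho_aux_cat (Z : tree Sigma) (v : tV Z) s1 s2 :
  rho_aux Z v (s1 ++ s2) = rho_prefix v s1 * rho_aux Z (last v (map (@tomega _ Z) s1)) s2.
Proof. by elim: s1 v => [|e s1 IH] v /=; rewrite ?amul1 // IH !amulA. Qed.

Lemma dwalk_last (Z : tree Sigma) (v : tV Z) es w :
  dwalk Sigma Z v es w -> last v (map (@tomega _ Z) es) = w.
Proof. by elim: es v => [|e es IH] v /=; [move/eqP | case/andP=> _ /IH]. Qed.

Variables X Y : tree Sigma.
Hypothesis HX : is_tree X.
Hypothesis HY : is_tree Y.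
Local Notation T := (tmul X Y).
Local Notation emb := (embY Sigma X Y).
Local Notation tX := (trunk Sigma X).
Local Notation tY := (trunk Sigma Y).

Lemma rho_prefix_tmul_inl d : forall p v, p ++ d = tX -> dwalk Sigma X v d (tend X) ->
  rho_prefix (inl v : tV T) (map inl d) = rho_prefix v d.
Proof.
elim: d => [|e d IH] p v //= hpd /andP [/eqP he hd].
have hv : v != tend X.
  apply/negP => /eqP hv; rewrite hv in he.
  have : dwalk Sigma X (tend X) (e :: d) (tend X) by rewrite /= he eqxx hd.
  by move/(dwalk_loop_nil HX).
rewrite (tau_trunk_tmul_inl chi HX HY hpd) //=; last by rewrite he eqxx hd.
by rewrite (IH (rcons p e)) // cat_rcons.
Qed.

Lemma rho_aux_tmul_embY d : forall p w, p ++ d = tY -> dwalk Sigma Y (tstart Y) p w ->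
  p != [::] -> dwalk Sigma Y w d (tend Y) ->
  rho_aux T (emb w) (map inr d) = rho_aux Y w d.
Proof.
elim: d => [|e d IH] p w hpd hp hne /=; first by move=> _; apply: tau_trunk_tmul_embY hpd hp hne.
case/andP => /eqP he hd.
rewrite (tau_trunk_tmul_embY chi HX HY hpd hp hne) (IH (rcons p e)) //.
- by rewrite cat_rcons.
- by rewrite -cats1; apply: (dwalk_catI hp); rewrite /= he !eqxx.
- by case: p {hpd hp hne}.
Qed.

Lemma rho_tmul : rho chi T = rho chi X * rho chi Y.
Proof.
have hX := trunkP HX; have hY := trunkP HY.
rewrite /rho (trunk_tmul HX HY) /tmul_trunk rho_aux_cat.
have hw : dwalk Sigma T (inl (tstart X)) (map inl tX) (inl (tend X)) by rewrite dwalk_inl.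
rewrite (dwalk_last hw) (rho_prefix_tmul_inl (p := [::])) //.
have -> : rho_aux X (tstart X) tX = rho_prefix (tstart X) tX * tau_trunk X (tend X).
  by rewrite -[tX in LHS]cats0 rho_aux_cat (dwalk_last hX).
rewrite -amulA; congr amul.
case htY : tY hY => [|f d] /= hY'.
  by rewrite (tau_trunk_tmul_junction chi HX HY) (eqP hY').
case/andP: hY' => /eqP hf hd.
rewrite (tau_trunk_tmul_junction chi HX HY) -amulA; do 3 congr amul.
by apply: (rho_aux_tmul_embY (p := [:: f])); rewrite //= hf !eqxx.
Qed.

End RhoGluing.

Theorem proposition5p5 (M : adequate_monoid) (Sigma : Type) (chi : Sigma -> M) :
  (forall X Y : tree Sigma, is_tree X -> is_tree Y ->
     rho chi (tmul X Y) = amul (rho chi X) (rho chi Y)) /\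
  (forall X : tree Sigma, is_tree X -> rho chi (tplus X) = aplus (rho chi X)) /\
  (forall X : tree Sigma, is_tree X -> rho chi (tstar X) = astar (rho chi X)) /\
  rho chi (ttriv Sigma) = aone M.
Proof.
split; [|split; [|split]].
- by move=> X Y HX HY; apply: rho_tmul.
- by move=> X HX; apply: rho_tplus.
- by move=> X HX; apply: rho_tstar.
- exact: rho_ttriv.
Qed.
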